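(* Consider the discrete-time linear control system on $\mathrm{Aff}(2,\mathbb{R})$ given by $(x_{k+1},y_{k+1})=f_{u_k}(x_k,y_k)$, $u_k\in U$, where $f_u(x,y)=(h(u)x,\ a(x-1)+dy+g(u)x)$ with $a\in\mathbb{R}$, $d\in\mathbb{R}\setminus\{0\}$, and $h:\mathbb{R}^m\to(0,\infty)$, $g:\mathbb{R}^m\to\mathbb{R}$ smooth with $h(0)=1$, $g(0)=0$, and $U\subset\mathbb{R}^m$ a compact convex neighborhood of $0$. If $h'(0)\neq0$, $-a\,h'(0)\neq g'(0)(d-1)$ and $d=1$, then the system is controllable.
   Context: $\mathrm{Aff}(2,\mathbb{R})$ is the set $(0,\infty)\times\mathbb{R}$ with product $(x_1,y_1)\cdot(x_2,y_2)=(x_1x_2,\ y_2+x_2y_1)$ and identity $(1,0)$. Controls are sequences $u=(u_i)_{i\in\mathbb{N}_0}\in U^{\mathbb{N}_0}$ and the solution is $\varphi(0,p,u)=p$, $\varphi(k,p,u)=f_{u_{k-1}}\circ\cdots\circ f_{u_0}(p)$. $h'(0)$ and $g'(0)$ denote the derivatives of $h$ and $g$ at $0$. The system is controllable if for all $p,q$ there are $k\in\mathbb{N}$ and a control $u$ with $\varphi(k,p,u)=q$. *)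

From HB Require Import structures.
From mathcomp Require Import all_boot all_order all_algebra.
From mathcomp Require Import all_classical all_reals all_analysis.
Set Implicit Arguments. Unset Strict Implicit. Unset Printing Implicit Defensive.
Import Order.TTheory GRing.Theory Num.Theory.
Import numFieldNormedType.Exports.
Local Open Scope classical_set_scope.
Local Open Scope ring_scope.

Section Defs.
Variable R : realType.
Variable m : nat.

Fixpoint iter_deriv (vs : seq 'rV[R]_m) (f : 'rV[R]_m -> R) : 'rV[R]_m -> R :=
  match vs with
  | [::] => f
  | v :: vs' => fun x => 'D_v (iter_deriv vs' f) x
  end.

Definition smooth (f : 'rV[R]_m -> R) : Prop :=
  forall (vs : seq 'rV[R]_m) (x : 'rV[R]_m), differentiable (iter_deriv vs f) x.

(* Aff(2,R) = (0,oo) x R *)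
Definition in_Aff2 (p : R * R) : Prop := 0 < p.1.

Definition f_sys (a d : R) (h g : 'rV[R]_m -> R) (u : 'rV[R]_m) (p : R * R) : R * R :=
  (h u * p.1, a * (p.1 - 1) + d * p.2 + g u * p.1).

Fixpoint phi (a d : R) (h g : 'rV[R]_m -> R) (k : nat) (p : R * R)
    (u : nat -> 'rV[R]_m) : R * R :=
  match k with
  | 0%N => p
  | k'.+1 => f_sys a d h g (u k') (phi a d h g k' p u)
  end.

Definition controllable (a d : R) (h g : 'rV[R]_m -> R) (U : set 'rV[R]_m) : Prop :=
  forall p q : R * R, in_Aff2 p -> in_Aff2 q ->
    exists (k : nat) (u : nat -> 'rV[R]_m),
      (0 < k)%N /\ (forall i, U (u i)) /\ phi a d h g k p u = q.

End Defs.

(* With d = 1 the system commutes with the vertical translations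
   (x, y) |-> (x, y + t), so it suffices to steer x to any positive value and,
   at x = 1, to shift y by any amount.
   Since h'(0) <> 0, inverting h along a line through 0 gives a continuous curve
   psi in U with h (psi c) = c for c near 1; the multipliers c near 1 generate
   the positive reals, which moves x anywhere.
   For d = 1 the hypothesis on h'(0) and g'(0) says a <> 0.  Starting from
   (1, y), apply psi c, rest n steps with u = 0, then apply psi c^-1: this
   returns to x = 1 and adds G c + n a (c - 1) to y, with G continuous.  The
   drift n a (c - 1) has opposite signs on both sides of c = 1 and dominates G
   for n large, so by the intermediate value theorem every shift is attained. *)

From HB Require Import structures.
From mathcomp Require Import all_boot all_order all_algebra.
From mathcomp Require Import all_classical all_reals all_analysis.
From mathcomp Require Import ring lra.
From Stdlib Require Import Relation_Operators Operators_Properties.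
Import Order.TTheory GRing.Theory Num.Theory.
Import numFieldNormedType.Exports.
Local Open Scope classical_set_scope.
Local Open Scope ring_scope.
Set Implicit Arguments. Unset Strict Implicit. Unset Printing Implicit Defensive.

Section Reachability.
Variables (R : realType) (m : nat) (a d : R) (h g : 'rV[R]_m -> R).
Variable U : set 'rV[R]_m.

Definition sys_step (p q : R * R) : Prop := exists2 u, U u & f_sys a d h g u p = q.

Definition reachable : R * R -> R * R -> Prop := clos_refl_trans _ sys_step.

Lemma reachable_f_sys u p : U u -> reachable p (f_sys a d h g u p).
Proof. by move=> Uu; apply: rt_step; exists u. Qed.

Lemma phi_cons k u v p :
  phi a d h g k.+1 p (fun i => if i is j.+1 then u j else v)
  = phi a d h g k (f_sys a d h g v p) u.
Proof. by elim: k => //= k ->. Qed.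

Lemma phi_of_step_reachable p p' q : sys_step p p' -> reachable p' q ->
  exists k u, (0 < k)%N /\ (forall i, U (u i)) /\ phi a d h g k p u = q.
Proof.
move=> + rt; elim: (clos_rt_rt1n _ _ _ _ rt) p => [q' | p1 p2 q' s12 _ IH] p [v Uv pE].
  by exists 1%N, (fun=> v); rewrite -pE.
have [k [w [_ [Uw <-]]]] := IH _ s12.
exists k.+1, (fun i => if i is j.+1 then w j else v); split=> //.
by split; [case | rewrite phi_cons pE].
Qed.

Lemma controllable_of_reachable u0 : U u0 -> (forall u, 0 < h u) ->
  (forall p q, in_Aff2 p -> in_Aff2 q -> reachable p q) ->
  controllable a d h g U.
Proof.
move=> Uu0 h_gt0 reach p q p_Aff q_Aff.
apply: (@phi_of_step_reachable _ (f_sys a d h g u0 p)); first by exists u0.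
by apply: reach => //; rewrite /in_Aff2 /= mulr_gt0.
Qed.

End Reachability.

Lemma exists_additive_gt0 (R : realDomainType) (V : zmodType) (L : {additive V -> R}) :
  (L : V -> R) <> (fun _ => 0) -> exists w, 0 < L w.
Proof.
move=> L_neq0; have [v Lv_neq0] : exists v, L v != 0.
  apply/not_existsP => L0; apply: L_neq0; apply: funext => v.
  by have /negP := L0 v; rewrite negbK => /eqP.
case: (ltrgt0P (L v)) Lv_neq0 => [Lv_gt0 | Lv_lt0 | //] _; first by exists v.
by exists (- v); rewrite raddfN oppr_gt0.
Qed.

Section RealLemmas.
Variable R : realType.

Lemma exists_root_near1 (P : set R) (r : R) : nbhs (1 : R) P -> 0 < r ->
  exists n, exists2 b, P b & b ^+ n = r.
Proof.
move=> P1 r_gt0.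
have : expR (ln r * harmonic n) @[n --> \oo] --> expR (ln r * 0).
  apply: continuous_cvg; first exact: continuous_expR.
  exact: cvgM (cvg_cst _) cvg_harmonic.
rewrite mulr0 expR0 => /(_ P P1) [N _ PN].
exists N.+1, (expR (ln r * harmonic N)); first exact: PN N (leqnn N).
by rewrite -(expRM_natl N.+1) /= mulrCA divff // mulr1 lnK ?posrE.
Qed.

Lemma ivt_with_drift (G : R -> R) (P : set R) (x0 a D : R) : a != 0 ->
  (\forall c \near x0, P c /\ {for c, continuous G}) ->
  exists n : nat, exists2 c, P c & G c + n%:R * (a * (c - x0)) = D.
Proof.
wlog a_gt0 : G a D / 0 < a => [wlog_pos | _].
  case: (ltrgt0P a) => [a_gt0 | a_lt0 | //] _ near_x0.
    exact: wlog_pos (lt0r_neq0 a_gt0) near_x0.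
  have [|||n [c Pc GcD]] := wlog_pos (fun c => - G c) (- a) (- D).
  - by rewrite oppr_gt0.
  - by rewrite oppr_eq0 ltr0_neq0.
  - by apply: filterS near_x0 => c [Pc Gc]; split=> //; exact: cvgN.
  - by exists n, c => //; apply: oppr_inj; rewrite -GcD; ring.
move=> /nbhs_ballP[e /= e_gt0 near_x0].
set e2 := e / 2; set lo := x0 - e2; set hi := x0 + e2.
have e2_gt0 : 0 < e2 by rewrite divr_gt0.
have near_lohi c : lo <= c <= hi -> P c /\ {for c, continuous G}.
  move=> /andP[lo_c c_hi]; apply: near_x0; rewrite /ball /=.
  by rewrite ltr_distlC; apply/andP; split; rewrite /lo /hi /e2 in lo_c c_hi *; lra.
set M := `|G lo - D| + `|G hi - D|.
set n := (Num.truncn (M / (a * e2))).+1.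
have n_big : M < n%:R * (a * e2).
  by rewrite -ltr_pdivrMr ?mulr_gt0 // Num.Theory.truncnS_gt.
set F := fun c => G c + n%:R * (a * (c - x0)).
have [|||c c_in FcD] := @IVT R F lo hi D.
- by rewrite /lo /hi; lra.
- apply: continuous_in_subspaceT => c /set_mem /=; rewrite in_itv /= => c_in.
  have [_ Gc] := near_lohi c c_in.
  apply: cvgD Gc _; apply: cvgM (cvg_cst _) _; apply: cvgM (cvg_cst _) _.
  exact: cvgB cvg_id (cvg_cst _).
- have lo_D := ler_norm (G lo - D); have hi_D := ler_norm (D - G hi).
  have := normr_ge0 (G lo - D); have := normr_ge0 (G hi - D).
  rewrite distrC in hi_D; rewrite /M in n_big.
  have lo_x0 : lo - x0 = - e2 by rewrite /lo; ring.
  have hi_x0 : hi - x0 = e2 by rewrite /hi; ring.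
  rewrite ge_min le_max /F lo_x0 hi_x0 !mulrN => ? ?.
  by apply/andP; split; apply/orP; [left | right]; lra.
by exists n, c => //; have [] := near_lohi c; rewrite in_itv /= in c_in.
Qed.

Lemma near_inverse_of_deriv_gt0 (f : R -> R) (x : R) :
  (forall t, derivable f t 1) -> (\forall t \near x, 0 < derive1 f t) ->
  exists2 s : R -> R, s (f x) = x &
    \forall c \near f x, f (s c) = c /\ {for c, continuous s}.
Proof.
move=> f_der /nbhs_ballP[e /= e_gt0 f'_gt0].
have f_cont : continuous f by move=> t; apply/differentiable_continuous/derivable1_diffP.
set e2 := e / 2; set I := `[x - e2, x + e2]%classic.
have e2_gt0 : 0 < e2 by rewrite divr_gt0.
have f_incr : forall s t, x - e2 <= s -> s < t -> t <= x + e2 -> f s < f t.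
  apply: gtr0_derive1_incr => [t _ | t | ]; first exact: f_der.
    rewrite in_itv /= => /andP[lo_t t_hi]; apply: f'_gt0; rewrite /ball /= ltr_distlC.
    by apply/andP; split; rewrite /e2 in lo_t t_hi; lra.
  exact: continuous_subspaceT.
have f_inj : {in I &, injective f}.
  move=> s t; rewrite !inE /I /= !in_itv /= => /andP[lo_s s_hi] /andP[lo_t t_hi] fst.
  case: (ltrgtP s t) => // [st | ts].
  - by have := f_incr s t lo_s st t_hi; rewrite fst ltxx.
  - by have := f_incr t s lo_t ts s_hi; rewrite fst ltxx.
have near_I : \forall t \near x, t \in I.
  apply/nbhs_ballP; exists e2 => // t; rewrite /ball /= ltr_distlC => /andP[lo_t t_hi].
  by rewrite inE /I /= in_itv /=; apply/andP; split; lra.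
have f_can : {near x, cancel f (pinv I f)} by apply: filterS near_I; exact: pinvKV.
have f_cont_near : {near x, continuous f} by apply: filterE => t; exact: f_cont.
have [s_cont s_can] := near_can_continuousAcan_sym f_can f_cont_near.
exists (pinv I f); first exact: nbhs_singleton f_can.
by apply: filterS2 s_can s_cont => c; split.
Qed.

End RealLemmas.

Section LineRestriction.
Variables (R : realType) (V : normedModType R) (h : V -> R) (w : V).

Let line_quotient_eq (t : R) :
  (fun s : R => s^-1 *: (h ((s *: 1 + t) *: w) - h (t *: w)))
  = (fun s : R => s^-1 *: (h (s *: w + t *: w) - h (t *: w))).
Proof. by apply: funext => s; rewrite scalerDl [s *: 1]mulr1. Qed.

Lemma derivable_line t :
  derivable h (t *: w) w -> derivable (fun s : R => h (s *: w)) t 1.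
Proof. by rewrite /derivable line_quotient_eq. Qed.

Lemma derive_line t : 'D_1 (fun s : R => h (s *: w)) t = 'D_w h (t *: w).
Proof. by rewrite /derive line_quotient_eq. Qed.

Lemma local_section (U : set V) :
  (forall x, differentiable h x) -> continuous ('D_w h) -> 0 < 'D_w h 0 ->
  nbhs 0 U ->
  exists psi : R -> V,
    \forall c \near h 0, U (psi c) /\ h (psi c) = c /\ {for c, continuous psi}.
Proof.
move=> h_diff Dh_cont Dh0_gt0 U0.
set f := fun t : R => h (t *: w).
have f_der t : derivable f t 1 by apply/derivable_line/diff_derivable.
have f'_gt0 : \forall t \near 0, 0 < derive1 f t.
  have Dh_line : {for 0, continuous (fun t : R => 'D_w h (t *: w))}.
    apply: (@continuous_comp _ _ _ (fun t : R => t *: w) ('D_w h)).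
      exact: scalel_continuous.
    exact: Dh_cont.
  move: Dh_line => /cvgr_gt /(_ 0); rewrite scale0r => /(_ Dh0_gt0).
  by apply: filterS => t; rewrite derive1E derive_line.
have [s s0 near_f0] := near_inverse_of_deriv_gt0 f_der f'_gt0.
have -> : h 0 = f 0 by rewrite /f scale0r.
exists (fun c => s c *: w).
have psi_cont : \forall c \near f 0, {for c, continuous (fun c => s c *: w)}.
  apply: filterS near_f0 => c [_ s_cont].
  apply: (@continuous_comp _ _ _ s (fun t : R => t *: w)) => //.
  exact: scalel_continuous.
have psi_U : \forall c \near f 0, U (s c *: w).
  have /(_ U) := nbhs_singleton psi_cont.
  by rewrite /= s0 scale0r; apply.
by apply: (filterS3 _ _ near_f0 psi_U psi_cont) => c [fsc _] Uc psi_c.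
Qed.

End LineRestriction.

Section UnitCoefficient.
Variables (R : realType) (m : nat) (a : R) (h g : 'rV[R]_m -> R).
Variable U : set 'rV[R]_m.
Local Notation reach := (reachable a 1 h g U).

Lemma reachable_move u x y x' y' : U u ->
  x' = h u * x -> y' = y + a * (x - 1) + g u * x -> reach (x, y) (x', y').
Proof.
move=> Uu -> ->; have := reachable_f_sys a 1 h g (x, y) Uu.
by rewrite /f_sys /= mul1r [a * _ + y]addrC.
Qed.

Lemma reachable_shift t p q : reach p q -> reach (p.1, p.2 + t) (q.1, q.2 + t).
Proof.
elim=> [[x y] q' [u Uu <-] | p' | p1 p2 p3 _ IH12 _ IH23].
- by apply: reachable_move Uu _ _ => //=; ring.
- exact: rt_refl.
- exact: rt_trans IH12 IH23.
Qed.

Lemma reachable_iter u n x y : U u -> exists y', reach (x, y) (h u ^+ n * x, y').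
Proof.
move=> Uu; elim: n => [|n [y' IH]].
  by exists y; rewrite expr0 mul1r; exact: rt_refl.
exists (y' + a * (h u ^+ n * x - 1) + g u * (h u ^+ n * x)).
by apply: rt_trans IH (reachable_move Uu _ _); rewrite // exprS mulrA.
Qed.

Lemma reachable_scale x y r : nbhs (1 : R) (h @` U) -> 0 < r ->
  exists y', reach (x, y) (r * x, y').
Proof.
move=> hU1 r_gt0; have [n [_ [u Uu <-] <-]] := exists_root_near1 hU1 r_gt0.
exact: reachable_iter.
Qed.

Hypotheses (U0 : U 0) (h0 : h 0 = 1) (g0 : g 0 = 0).

Lemma reachable_rest n x y : reach (x, y) (x, y + n%:R * (a * (x - 1))).
Proof.
elim: n => [|n IH]; first by rewrite mul0r addr0; exact: rt_refl.
apply: rt_trans IH (reachable_move U0 _ _); first by rewrite h0 mul1r.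
by rewrite g0 mul0r addr0 -natr1; ring.
Qed.

Lemma reachable_loop u v n y : U u -> U v -> h v * h u = 1 ->
  reach (1, y) (1, y + (g u + a * (h u - 1) + h u * g v) + n%:R * (a * (h u - 1))).
Proof.
move=> Uu Uv hvu.
apply: (@rt_trans _ _ _ (h u, y + g u)); first by apply: reachable_move Uu _ _; ring.
apply: rt_trans (reachable_rest n _ _) _.
by apply: reachable_move Uv _ _; [rewrite hvu | ring].
Qed.

Lemma reachable_vertical (psi : R -> 'rV[R]_m) (y D : R) : a != 0 -> continuous g ->
  (\forall c \near (1 : R), U (psi c) /\ h (psi c) = c /\ {for c, continuous psi}) ->
  reach (1, y) (1, y + D).
Proof.
move=> a_neq0 g_cont section.
have section_inv : \forall c \near (1 : R),
    U (psi c^-1) /\ h (psi c^-1) = c^-1 /\ {for c^-1, continuous psi}.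
  have inv1 : (@GRing.inv R) @ (1 : R) --> (1 : R).
    by rewrite -[X in _ --> X]invr1; exact: inv_continuous (oner_neq0 R).
  exact: inv1 section.
pose G c := g (psi c) + a * (c - 1) + c * g (psi c^-1).
pose P c := [/\ U (psi c), U (psi c^-1), h (psi c) = c, h (psi c^-1) = c^-1 & c != 0].
have near_P : \forall c \near (1 : R), P c /\ {for c, continuous G}.
  apply: (filterS3 _ _ section section_inv (lt_nbhsr ltr01)).
  move=> c [Uc [hc psi_c]] [Uc' [hc' psi_cinv]] c_gt0.
  split; first by split=> //; exact: lt0r_neq0.
  have gpsi_c : {for c, continuous (g \o psi)} by exact: continuous_comp psi_c (g_cont _).
  have gpsi_cinv : {for c, continuous (fun t : R => g (psi t^-1))}.
    apply: (@continuous_comp _ _ _ (@GRing.inv R) (g \o psi) c).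
      exact: inv_continuous (lt0r_neq0 c_gt0).
    exact: continuous_comp psi_cinv (g_cont _).
  apply: cvgD; first apply: cvgD gpsi_c _.
  - exact: cvgM (cvg_cst _) (cvgB cvg_id (cvg_cst _)).
  - exact: cvgM cvg_id gpsi_cinv.
have [n [c [Uu Uv hu hv c_neq0] GcD]] := ivt_with_drift D a_neq0 near_P.
have hvu : h (psi c^-1) * h (psi c) = 1 by rewrite hu hv mulVf.
have := reachable_loop n y Uu Uv hvu.
by rewrite hu -addrA GcD.
Qed.

Lemma reachable_Aff2 (psi : R -> 'rV[R]_m) : a != 0 -> continuous g ->
  (\forall c \near (1 : R), U (psi c) /\ h (psi c) = c /\ {for c, continuous psi}) ->
  forall p q, in_Aff2 p -> in_Aff2 q -> reach p q.
Proof.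
move=> a_neq0 g_cont section [xp yp] [xq yq]; rewrite /in_Aff2 /= => xp_gt0 xq_gt0.
have hU1 : nbhs (1 : R) (h @` U).
  by apply: filterS section => c [Uc [hc _]]; exists (psi c).
have [y1 p_to_1] : exists y1, reach (xp, yp) (xp^-1 * xp, y1).
  by apply: reachable_scale hU1 _; rewrite invr_gt0.
rewrite mulVf ?gt_eqF // in p_to_1.
have [y2 one_to_q] := reachable_scale 1 0 hU1 xq_gt0.
have := reachable_shift (yq - y2) one_to_q.
rewrite /= add0r mulr1 [y2 + _]addrC subrK => {}one_to_q.
apply: rt_trans p_to_1 _; apply: rt_trans _ one_to_q.
by have := reachable_vertical y1 (yq - y2 - y1) a_neq0 g_cont section; rewrite addrC subrK.
Qed.

End UnitCoefficient.

Theorem theorem3p9 (R : realType) (m : nat) (a d : R)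
  (h g : 'rV[R]_m -> R) (U : set 'rV[R]_m) :
  d != 0 ->
  (forall u, 0 < h u) ->
  smooth h -> smooth g ->
  h 0 = 1 -> g 0 = 0 ->
  compact U -> convex_set U -> nbhs (0 : 'rV[R]_m) U ->
  ('d h 0 : 'rV[R]_m -> R) <> (fun _ => 0) ->
  (fun v : 'rV[R]_m => - a * 'd h 0 v) <> (fun v => 'd g 0 v * (d - 1)) ->
  d = 1 ->
  controllable a d h g U.
Proof.
move=> _ h_gt0 h_smooth g_smooth h0 g0 _ _ U_nbhs0 dh0_neq0 drift_cond d1; subst d.
have a_neq0 : a != 0.
  apply/eqP => a0; apply: drift_cond; apply: funext => v.
  by rewrite a0 oppr0 mul0r subrr mulr0.
have h_diff x : differentiable h x := h_smooth [::] x.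
have g_cont : continuous g := fun x => differentiable_continuous (g_smooth [::] x).
have Dh_cont w : continuous ('D_w h) :=
  fun x => differentiable_continuous (h_smooth [:: w] x).
have [w dhw_gt0] := exists_additive_gt0 dh0_neq0.
have Dwh0_gt0 : 0 < 'D_w h 0 by rewrite deriveE.
have [psi section] := local_section h_diff (Dh_cont w) Dwh0_gt0 U_nbhs0.
rewrite h0 in section.
apply: (controllable_of_reachable (nbhs_singleton U_nbhs0) h_gt0).
exact: (reachable_Aff2 (nbhs_singleton U_nbhs0) h0 g0 a_neq0 g_cont section).
Qed.
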